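(* Consider SEG: $X_{t+1/2}=X_t-\gamma F_t$, $X_{t+1}=X_t-\alpha\gamma F_{t+1/2}$, where $F_t=F(X_t)+U_t(X_t)$ and $F_{t+1/2}=F(X_{t+1/2})+U_{t+1/2}(X_{t+1/2})$. Let $F:\mathbb{R}^d\to\mathbb{R}^d$ be $L$-Lipschitz, let $x^*\in X^*=\{x:F(x)=0\}$ satisfy $\langle F(x),x-x^*\rangle\ge\mu\|x-x^*\|^2-\lambda$ for all $x$ (with $\lambda\ge0,\mu>0$), and assume the stochastic oracle assumptions of the context. Let $Z_t=F_{t+1/2}$ and $\mathrm{drift}_t=\gamma\,\mathbb{E}[\langle Z_t,X_t-x^*\rangle\mid\mathcal{F}_t]$. If $0<\gamma<\frac1{2\mu+\sqrt3L}$, then $$-\mathrm{drift}_t\le-\frac{\mu\gamma}{2}\|X_t-x^*\|^2+(\gamma\lambda+3\gamma^2\sigma^2).$$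
   Context: Stochastic oracle: noise fields are i.i.d. random fields; filtration $(\mathcal{F}_t)$ (history of the iterates) with $\mathcal{F}_{t+1/2}=\mathcal{F}_t$; $U_t(X_t)$ is $\mathcal{F}_{t+1}$- but not $\mathcal{F}_t$-measurable; $\mathbb{E}[U_t(x)\mid\mathcal{F}_t]=0$ and $\mathbb{E}[\|U_t(x)\|^2\mid\mathcal{F}_t]\le\sigma^2$ for all $x$ (and likewise for $U_{t+1/2}$). *)

From HB Require Import structures.
From mathcomp Require Import all_boot all_order all_algebra.
From mathcomp Require Import all_classical all_reals all_analysis.
Set Implicit Arguments. Unset Strict Implicit. Unset Printing Implicit Defensive.
Import Order.TTheory GRing.Theory Num.Theory.
Local Open Scope ring_scope.

Definition dotv {R : realType} {d : nat} (u v : 'rV[R]_d) : R :=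
  \sum_(i < d) u 0 i * v 0 i.
Definition sqnorm {R : realType} {d : nat} (u : 'rV[R]_d) : R := dotv u u.
Definition normv {R : realType} {d : nat} (u : 'rV[R]_d) : R := Num.sqrt (sqnorm u).

(* One SEG leading step from the (F_t-measurable, hence fixed) point x:
   X_{t+1/2} = x - gamma * (F x + U1(w1, x)). *)
Definition seg_half {R : realType} {d : nat} {O1 : Type}
  (F : 'rV[R]_d -> 'rV[R]_d) (U1 : O1 -> 'rV[R]_d -> 'rV[R]_d)
  (gamma : R) (x : 'rV[R]_d) (w1 : O1) : 'rV[R]_d :=
  x - gamma *: (F x + U1 w1 x).

Definition seg_Z {R : realType} {d : nat} {O1 O2 : Type}
  (F : 'rV[R]_d -> 'rV[R]_d) (U1 : O1 -> 'rV[R]_d -> 'rV[R]_d)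
  (U2 : O2 -> 'rV[R]_d -> 'rV[R]_d)
  (gamma : R) (x : 'rV[R]_d) (w1 : O1) (w2 : O2) : 'rV[R]_d :=
  let y := seg_half F U1 gamma x w1 in F y + U2 w2 y.

Definition oracle_noise {R : realType} {d : nat} {dO : measure_display}
  {O : measurableType dO} (P : probability O R)
  (U : O -> 'rV[R]_d -> 'rV[R]_d) (sigma : R) : Prop :=
  forall y : 'rV[R]_d,
    (forall i : 'I_d,
        P.-integrable setT (fun w => ((U w y) 0 i)%:E) /\
        (\int[P]_w ((U w y) 0 i)%:E = 0)%E) /\
    (\int[P]_w (sqnorm (U w y))%:E <= (sigma ^+ 2)%:E)%E.

(* drift_t = gamma * E[ <Z_t, X_t - x*> | F_t ], computed (given X_t = x)
   by integrating first the half-step noise, then the leading-step noise. *)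
Definition seg_drift {R : realType} {d : nat} {d1 d2 : measure_display}
  {O1 : measurableType d1} {O2 : measurableType d2}
  (P1 : probability O1 R) (P2 : probability O2 R)
  (F : 'rV[R]_d -> 'rV[R]_d) (U1 : O1 -> 'rV[R]_d -> 'rV[R]_d)
  (U2 : O2 -> 'rV[R]_d -> 'rV[R]_d) (gamma : R) (x xs : 'rV[R]_d) : \bar R :=
  (gamma%:E * \int[P1]_w1 \int[P2]_w2
      (dotv (seg_Z F U1 U2 gamma x w1 w2) (x - xs))%:E)%E.

(* Given X_t = x, the noise U_{t+1/2} of the update step averages out of
   <Z_t, x - x*>, so the drift is gamma E<F(X_{t+1/2}), x - x*>.  Writing
   x - x* = X_{t+1/2} - x* + gamma F_t, the quasi-strong monotonicity bounds
   the first part, and Lipschitz continuity with Young's inequality bounds the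
   error F(X_{t+1/2}) - F(x) in the second.  The resulting lower bound is a
   quadratic polynomial in the noise U_t(x), whose expectation only involves
   its second moment; the step-size condition, through
   2 mu gamma + (L gamma)^2 <= 1, makes the remaining coefficients
   nonnegative. *)
From HB Require Import structures.
From mathcomp Require Import all_boot all_order all_algebra.
From mathcomp Require Import all_classical all_reals all_analysis.
From mathcomp Require Import ring lra.
Import Order.TTheory GRing.Theory Num.Theory.
Local Open Scope ring_scope.

Set Implicit Arguments.
Unset Strict Implicit.

Section InnerProduct.
Context {R : realType} {d : nat}.
Implicit Types (u v w : 'rV[R]_d).

Lemma dotvC u v : dotv u v = dotv v u.
Proof. by apply: eq_bigr => i _; rewrite mulrC. Qed.

Lemma dotvDl u v w : dotv (u + v) w = dotv u w + dotv v w.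
Proof. by rewrite /dotv -big_split; apply: eq_bigr => i _; rewrite !mxE mulrDl. Qed.

Lemma dotvDr u v w : dotv w (u + v) = dotv w u + dotv w v.
Proof. by rewrite dotvC dotvDl !(dotvC w). Qed.

Lemma dotvZl (k : R) u v : dotv (k *: u) v = k * dotv u v.
Proof. by rewrite /dotv mulr_sumr; apply: eq_bigr => i _; rewrite !mxE mulrA. Qed.

Lemma dotvZr (k : R) u v : dotv v (k *: u) = k * dotv v u.
Proof. by rewrite dotvC dotvZl dotvC. Qed.

Lemma dotvNl u v : dotv (- u) v = - dotv u v.
Proof. by rewrite -scaleN1r dotvZl mulN1r. Qed.

Lemma dotvNr u v : dotv v (- u) = - dotv v u.
Proof. by rewrite dotvC dotvNl dotvC. Qed.

Lemma sqnorm_ge0 u : 0 <= sqnorm u.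
Proof. by apply: sumr_ge0 => i _; rewrite -expr2 sqr_ge0. Qed.

Lemma sqnormZ (k : R) u : sqnorm (k *: u) = k ^+ 2 * sqnorm u.
Proof. by rewrite /sqnorm dotvZl dotvZr mulrA expr2. Qed.

Lemma sqnormN u : sqnorm (- u) = sqnorm u.
Proof. by rewrite /sqnorm dotvNl dotvNr opprK. Qed.

Lemma sqnormD u v : sqnorm (u + v) = sqnorm u + 2 * dotv u v + sqnorm v.
Proof. by rewrite /sqnorm !(dotvDl, dotvDr) (dotvC v u); ring. Qed.

Lemma sqnormB u v : sqnorm (u - v) = sqnorm u - 2 * dotv u v + sqnorm v.
Proof. by rewrite sqnormD dotvNr sqnormN; ring. Qed.

Lemma dotv_ge_sqnorm u v : - ((sqnorm u + sqnorm v) / 2) <= dotv u v.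
Proof. by have := sqnorm_ge0 (u + v); rewrite sqnormD; lra. Qed.

Lemma sqnormD_le u v : sqnorm (u + v) <= 2 * sqnorm u + 2 * sqnorm v.
Proof. by have := sqnorm_ge0 (u - v); rewrite sqnormB sqnormD; lra. Qed.

Lemma sqnorm_le_normv (L : R) u v :
  0 <= L -> normv u <= L * normv v -> sqnorm u <= L ^+ 2 * sqnorm v.
Proof.
move=> L0 uv; rewrite -(sqr_sqrtr (sqnorm_ge0 u)) -(sqr_sqrtr (sqnorm_ge0 v)).
by rewrite -exprMn ler_sqr ?nnegrE ?mulr_ge0 ?sqrtr_ge0.
Qed.

Lemma sqnorm_expand_noise (m g k : R) b u r :
  m * sqnorm (b - g *: r) + g * dotv u (u + r) - k * sqnorm (u + r) =
  m * sqnorm b + (g - k) * sqnorm u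
  + dotv ((g - 2 * k) *: u - (2 * m * g) *: b) r + (m * g ^+ 2 - k) * sqnorm r.
Proof.
rewrite sqnormB sqnormD sqnormZ dotvDl dotvNl !(dotvZl, dotvZr, dotvDr).
by rewrite /sqnorm (dotvC b r); ring.
Qed.

End InnerProduct.

Section CenteredNoise.
Local Open Scope ereal_scope.
Context {R : realType} {dT : measure_display} {T : measurableType dT}.

(* No measurability is needed: the integral is built from suprema over simple
   minorants of the positive and negative parts. *)
Lemma le_integralT (mu : {measure set T -> \bar R}) (f g : T -> \bar R) :
  (forall x, f x <= g x) -> \int[mu]_x f x <= \int[mu]_x g x.
Proof.
move=> fg; rewrite /integral !patch_setT.
apply: leeB; apply: ereal_sup_le => _ [s /= sf <-]; exists s => //= x.
- apply: le_trans (sf x) _; apply: (@funepos_le _ _ setT); last exact: in_setT.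
  by move=> y _; exact: fg.
- apply: le_trans (sf x) _; apply: (@funeneg_le _ _ setT); last exact: in_setT.
  by move=> y _; exact: fg.
Qed.

Variables (P : probability T R) (d : nat).
Implicit Type V : T -> 'rV[R]_d.

Definition centered V := forall i : 'I_d,
  P.-integrable setT (fun w => (V w 0 i)%:E) /\ \int[P]_w (V w 0 i)%:E = 0.

Lemma integral_cst_prob (c : R) : \int[P]_x c%:E = c%:E.
Proof.
by rewrite integral_cst // -[RHS]mule1; congr (_ * _); exact: probability_setT.
Qed.

Lemma centered_dotv V (v : 'rV[R]_d) : centered V ->
  P.-integrable setT (fun w => (dotv v (V w))%:E) /\
  \int[P]_w (dotv v (V w))%:E = 0.
Proof.
move=> cV.
have -> : (fun w => (dotv v (V w))%:E) =
    (fun w => \sum_(i < d) (v 0 i)%:E * (V w 0 i)%:E).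
  by apply/funext => w; rewrite /dotv -sumEFin.
have vV i : P.-integrable setT (fun w => (v 0 i)%:E * (V w 0 i)%:E).
  by apply: integrableZl; case: (cV i).
split; first by apply: integrable_sum => // i _; exact: vV.
rewrite integral_sum //; apply: big1 => i _.
by case: (cV i) => Vi EVi; rewrite integralZl // EVi mule0.
Qed.

Lemma integral_affine_centered V (c : R) (v : 'rV[R]_d) : centered V ->
  \int[P]_w (c%:E + (dotv v (V w))%:E) = c%:E.
Proof.
move=> /(centered_dotv v) [iv ev].
rewrite integralD //; first by rewrite integral_cst_prob ev adde0.
exact: finite_measure_integrable_cst.
Qed.

Lemma integrable_sqnorm V (s : R) :
  (forall i : 'I_d, P.-integrable setT (fun w => (V w 0 i)%:E)) ->
  \int[P]_w (sqnorm (V w))%:E <= s%:E ->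
  P.-integrable setT (fun w => (sqnorm (V w))%:E).
Proof.
move=> iV Vs; apply/integrableP; split.
  apply/measurable_realfun.measurable_EFinP; apply: measurable_sum => i.
  apply: measurable_realfun.measurable_funM;
    by apply/measurable_realfun.measurable_EFinP; exact: measurable_int (iV i).
apply: le_lt_trans (ltry s); apply: le_trans Vs.
by apply: le_integralT => w; rewrite gee0_abs // lee_fin sqnorm_ge0.
Qed.

Lemma integral_quadratic_centered V (c k : R) (v : 'rV[R]_d) :
  centered V -> P.-integrable setT (fun w => (sqnorm (V w))%:E) ->
  \int[P]_w (c + dotv v (V w) + k * sqnorm (V w))%:E =
  c%:E + k%:E * \int[P]_w (sqnorm (V w))%:E.
Proof.
move=> cV iV; have [iv _] := centered_dotv v cV.
rewrite (eq_integral (fun w =>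
  c%:E + (dotv v (V w))%:E + k%:E * (sqnorm (V w))%:E))
  => [|w _]; last by rewrite !EFinD EFinM.
rewrite integralD //; last by apply: integrableZl.
  by rewrite integral_affine_centered // integralZl.
by apply: integrableD => //; exact: finite_measure_integrable_cst.
Qed.

End CenteredNoise.

Section OracleNoise.
Context {R : realType} {d : nat} {dO : measure_display} {O : measurableType dO}.
Variables (P : probability O R) (U : O -> 'rV[R]_d -> 'rV[R]_d) (sigma : R).
Hypothesis noise : oracle_noise P U sigma.

Lemma oracle_centered y : centered P (fun w => U w y).
Proof. exact: (noise y).1. Qed.

Lemma oracle_integrable_sqnorm y :
  P.-integrable setT (fun w => (sqnorm (U w y))%:E).
Proof.
apply: (integrable_sqnorm (s := sigma ^+ 2)) (noise y).2.
by move=> i; case: ((noise y).1 i).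
Qed.

Lemma oracle_second_moment y : exists2 e : R,
  (\int[P]_w (sqnorm (U w y))%:E = e%:E)%E & 0 <= e <= sigma ^+ 2.
Proof.
have /fineK Ee := integrable_fin_num measurableT (oracle_integrable_sqnorm y).
exists (fine (\int[P]_w (sqnorm (U w y))%:E)%E) => //; apply/andP; split.
  by rewrite -lee_fin Ee; apply: integral_ge0 => w _; rewrite lee_fin sqnorm_ge0.
by rewrite -lee_fin Ee; exact: (noise y).2.
Qed.

End OracleNoise.

Lemma seg_step_size (R : realType) (L mu gamma : R) :
  0 < gamma -> 0 < mu -> 0 <= L -> gamma < 1 / (2 * mu + Num.sqrt 3 * L) ->
  2 * mu * gamma + (L * gamma) ^+ 2 <= 1.
Proof.
move=> g0 mu0 L0 gb.
have s3 : 1 <= Num.sqrt (3 : R).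
  by rewrite -[X in X <= _]sqrtr1 ler_sqrt // ler1n.
have Lg0 : 0 <= L * gamma by rewrite mulr_ge0 // ltW.
have D0 : 0 < 2 * mu + Num.sqrt 3 * L.
  by rewrite ltr_wpDr ?mulr_ge0 ?sqrtr_ge0 // mulr_gt0.
rewrite ltr_pdivlMr // in gb.
have Lg1 : L * gamma <= Num.sqrt 3 * L * gamma.
  by rewrite -mulrA ler_peMl.
have mug : 0 < mu * gamma by rewrite mulr_gt0.
have sq : (L * gamma) ^+ 2 <= L * gamma by rewrite expr2 ler_piMl //; lra.
lra.
Qed.

Section SEG.
Context {R : realType} {d : nat}.
Variables (F : 'rV[R]_d -> 'rV[R]_d) (L mu lambda gamma : R) (xs : 'rV[R]_d).
Hypothesis L_ge0 : 0 <= L.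
Hypothesis F_lipschitz : forall y z, normv (F y - F z) <= L * normv (y - z).
Hypothesis F_quasi_strong_monotone :
  forall y, mu * sqnorm (y - xs) - lambda <= dotv (F y) (y - xs).
Hypothesis mu_gt0 : 0 < mu.
Hypothesis gamma_gt0 : 0 < gamma.
Hypothesis step_size : 2 * mu * gamma + (L * gamma) ^+ 2 <= 1.
Variables (dO1 dO2 : measure_display).
Variables (O1 : measurableType dO1) (O2 : measurableType dO2).
Variables (P1 : probability O1 R) (P2 : probability O2 R) (sigma : R).
Variables (U1 : O1 -> 'rV[R]_d -> 'rV[R]_d) (U2 : O2 -> 'rV[R]_d -> 'rV[R]_d).
Hypothesis noise1 : oracle_noise P1 U1 sigma.
Hypothesis noise2 : oracle_noise P2 U2 sigma.

Lemma integral_seg_Z x w1 a :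
  (\int[P2]_w2 (dotv (seg_Z F U1 U2 gamma x w1 w2) a)%:E =
   (dotv (F (seg_half F U1 gamma x w1)) a)%:E)%E.
Proof.
set y := seg_half F U1 gamma x w1.
rewrite -(integral_affine_centered (dotv (F y) a) a (oracle_centered noise2 y)).
apply: eq_integral => w2 _.
by rewrite /seg_Z -/y dotvDl EFinD (dotvC (U2 w2 y)).
Qed.

Lemma dotv_extrapolation_ge x g :
  mu * sqnorm (x - gamma *: g - xs) - lambda + gamma * dotv (F x) g
    - gamma * (1 + L ^+ 2 * gamma ^+ 2) / 2 * sqnorm g
  <= dotv (F (x - gamma *: g)) (x - xs).
Proof.
set y := x - gamma *: g.
have -> : x - xs = y - xs + gamma *: g by rewrite addrAC subrK.
have lip : sqnorm (F y - F x) <= L ^+ 2 * gamma ^+ 2 * sqnorm g.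
  have := sqnorm_le_normv L_ge0 (F_lipschitz y x).
  by rewrite /y addrAC subrr add0r sqnormN sqnormZ mulrA.
have Fy : dotv (F y) g = dotv (F x) g + dotv (F y - F x) g.
  by rewrite -dotvDl addrC subrK.
have young := ler_wpM2l (ltW gamma_gt0) (dotv_ge_sqnorm (F y - F x) g).
have lipg := ler_wpM2l (ltW gamma_gt0) lip.
have := F_quasi_strong_monotone y.
by rewrite [dotv (F y) (_ + gamma *: _)]dotvDr dotvZr Fy; lra.
Qed.

Lemma seg_half_expectation_ge x :
  ((mu / 2 * sqnorm (x - xs) - lambda - gamma * sigma ^+ 2)%:E <=
   \int[P1]_w (dotv (F (seg_half F U1 gamma x w)) (x - xs))%:E)%E.
Proof.
set a := x - xs; set u := F x; set b := a - gamma *: u.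
pose k := gamma * (1 + L ^+ 2 * gamma ^+ 2) / 2.
pose v := (gamma - 2 * k) *: u - (2 * mu * gamma) *: b.
have pointwise w : (((mu * sqnorm b - lambda + (gamma - k) * sqnorm u)
    + dotv v (U1 w x) + (mu * gamma ^+ 2 - k) * sqnorm (U1 w x))%:E
  <= (dotv (F (seg_half F U1 gamma x w)) a)%:E)%E.
  rewrite lee_fin /seg_half -/u; have := dotv_extrapolation_ge x (u + U1 w x).
  have -> : x - gamma *: (u + U1 w x) - xs = b - gamma *: U1 w x.
    by apply/rowP => i; rewrite !mxE; ring.
  rewrite -/u -/a -/k; have := sqnorm_expand_noise mu gamma k b u (U1 w x).
  by rewrite -/v; lra.
apply: le_trans (le_integralT _ pointwise).
rewrite integral_quadratic_centered; last 2 first.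
- exact: oracle_centered noise1 x.
- exact: oracle_integrable_sqnorm noise1 x.
have [e -> /andP[e0 eS]] := oracle_second_moment noise1 x.
rewrite -EFinM -EFinD lee_fin.
have ha : sqnorm a <= 2 * sqnorm b + 2 * (gamma ^+ 2 * sqnorm u).
  by have := sqnormD_le b (gamma *: u); rewrite subrK sqnormZ.
have hk : mu * gamma ^+ 2 <= gamma - k.
  have -> : gamma - k =
      mu * gamma ^+ 2 + gamma / 2 * (1 - (2 * mu * gamma + (L * gamma) ^+ 2)).
    by rewrite /k; field.
  by rewrite lerDl mulr_ge0 ?subr_ge0 ?divr_ge0 ?ler0n ?(ltW gamma_gt0).
have mug2 : 0 <= mu * gamma ^+ 2 by rewrite mulr_ge0 ?sqr_ge0 ?(ltW mu_gt0).
have k0 : 0 <= k.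
  by rewrite /k divr_ge0 ?ler0n // mulr_ge0 ?addr_ge0 ?mulr_ge0 ?sqr_ge0
    ?(ltW gamma_gt0).
have ke : k * e <= gamma * sigma ^+ 2 by rewrite ler_pM //; lra.
have := ler_wpM2l (ltW mu_gt0) ha.
have := ler_wpM2r (sqnorm_ge0 u) hk.
have := mulr_ge0 mug2 e0.
lra.
Qed.

End SEG.

Theorem propositionB2 (R : realType) (d : nat)
  (d1 d2 : measure_display) (O1 : measurableType d1) (O2 : measurableType d2)
  (P1 : probability O1 R) (P2 : probability O2 R)
  (F : 'rV[R]_d -> 'rV[R]_d) (L mu lambda sigma gamma : R)
  (xs x : 'rV[R]_d)
  (U1 : O1 -> 'rV[R]_d -> 'rV[R]_d) (U2 : O2 -> 'rV[R]_d -> 'rV[R]_d) :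
  0 <= L ->
  (forall y z : 'rV[R]_d, normv (F y - F z) <= L * normv (y - z)) ->
  F xs = 0 ->
  0 <= lambda -> 0 < mu ->
  (forall y : 'rV[R]_d, dotv (F y) (y - xs) >= mu * sqnorm (y - xs) - lambda) ->
  0 <= sigma ->
  oracle_noise P1 U1 sigma ->
  oracle_noise P2 U2 sigma ->
  0 < gamma -> gamma < 1 / (2 * mu + Num.sqrt 3 * L) ->
  (- seg_drift P1 P2 F U1 U2 gamma x xs <=
     (- (mu * gamma / 2) * sqnorm (x - xs)
      + (gamma * lambda + 3 * gamma ^+ 2 * sigma ^+ 2))%:E)%E.
Proof.
move=> L0 lip _ _ mu0 mono _ noise1 noise2 g0 gb.
have step := seg_step_size g0 mu0 L0 gb.
rewrite /seg_drift.
under eq_integral => w1 _ do rewrite (integral_seg_Z _ _ _ noise2).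
have half := seg_half_expectation_ge L0 lip mono mu0 g0 step noise1 x.
have g0E : (0 <= gamma%:E)%E by rewrite lee_fin ltW.
rewrite leeNl; apply: le_trans (lee_wpmul2l g0E half).
rewrite -EFinM -EFinN lee_fin.
by have := mulr_ge0 (sqr_ge0 gamma) (sqr_ge0 sigma); lra.
Qed.
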